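(* Let $u$ be a one-sided Sturmian sequence over $\{0,1\}$, let $X_u^+$ be the closure of $\{\sigma^n u : n\in\mathbb N\}$, and let $l=l_1l_2l_3\dots$ be the left special sequence of $X_u^+$, with $L_n=l_1\dots l_n$ for $n\ge 1$ and $L_0$ the empty block. Then the HB diagram of $X_u^+$ is the directed graph whose vertices are $0$, $1$, $0L_n$ and $1L_n$ for $n\ge 1$, and whose arrows are exactly the following: (1) if $l_1=0$: $0\to 1$, $0\to 00$ and $1\to 10$; if $l_1=1$: $1\to 0$, $1\to 11$ and $0\to 01$; (2) $0L_n\to 0L_{n+1}$ and $1L_n\to 1L_{n+1}$ for all $n\ge 1$; (3) whenever $xL_n$ and $wL_m$ ($x,w\in\{0,1\}$, $n>m\ge 0$) are consecutive right special significant blocks: (a) if $x\neq w$, then $xL_n\to wL_{m+1}$; (b) if $x=w$, then $xL_n\to \mathrm{sig}(wL_m y)$, where $y\in\{0,1\}$, $y\neq l_{m+1}$.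
   Context: A sequence $u\in\{0,1\}^{\mathbb N}$ is Sturmian if for every $n\ge1$ exactly $n+1$ distinct blocks of length $n$ occur in $u$. Let $\tilde X_u=\{x\in\{0,1\}^{\mathbb Z}: x_px_{p+1}\dots\in X_u^+ \text{ for all } p\in\mathbb Z\}$ be the natural extension; the languages (sets of finite blocks occurring) of $u$, $X_u^+$ and $\tilde X_u$ coincide. For each $n$ there is a unique block $L_n$ of length $n$ with both $0L_n$ and $1L_n$ in the language (left special block), and these are the prefixes of a single infinite sequence $l=l_1l_2\dots$, the left special sequence. A block $v$ is right special if both $v0$ and $v1$ are in the language; there is exactly one right special block of each length. For a block $a_{-n}\dots a_0$ in the language, $\mathrm{fol}(a_{-n}\dots a_0)=\{b_0b_1\dots\in X_u^+:\exists b\in\tilde X_u,\ b_{-n}\dots b_0=a_{-n}\dots a_0\}$. A block $a_{-n}\dots a_0$ ($n\ge1$) is significant if $\mathrm{fol}(a_{-n}\dots a_0)\subsetneq \mathrm{fol}(a_{-n+1}\dots a_0)$; the blocks $0$ and $1$ are also counted as significant. $\mathrm{sig}(a_{-n}\dots a_0)$ denotes the longest significant suffix of $a_{-n}\dots a_0$. The HB diagram has as vertices the significant blocks, with an arrow $\alpha\to\beta$ iff there is a symbol $b$ with $\alpha b$ in the language and $\beta=\mathrm{sig}(\alpha b)$. Two right special significant blocks of lengths $m+1<n+1$ are consecutive if there is no right special significant block of length strictly between $m+1$ and $n+1$. *)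

(* sequences over {0,1} are functions nat -> bool
   (false = 0, true = 1); blocks are seq bool; two-sided sequences int -> bool. *)
From mathcomp Require Import all_boot all_order all_algebra.
Set Implicit Arguments. Unset Strict Implicit. Unset Printing Implicit Defensive.

Definition occursAt (x : nat -> bool) (w : seq bool) (i : nat) : Prop :=
  forall j, j < size w -> x (i + j) = nth false w j.

Definition lang (u : nat -> bool) (w : seq bool) : Prop := exists i, occursAt u w i.

Definition Sturmian (u : nat -> bool) : Prop :=
  forall n, 0 < n ->
    exists s : seq (seq bool),
      [/\ uniq s, size s = n.+1 & forall w, w \in s <-> (size w = n /\ lang u w)].

(* X_u^+ : closure of the orbit {sigma^n u} in the product topology:
   every basic (cylinder) neighbourhood of x meets the orbit *)
Definition Xplus (u : nat -> bool) (x : nat -> bool) : Prop :=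
  forall k, exists n, forall j, j < k -> u (n + j) = x j.

Definition Xtilde (u : nat -> bool) (b : int -> bool) : Prop :=
  forall p : int, Xplus u (fun k : nat => b (GRing.add p (Posz k))).

(* fol(a_{-n} ... a_0), the block a being listed as [:: a_{-n}; ...; a_0] *)
Definition fol (u : nat -> bool) (a : seq bool) (y : nat -> bool) : Prop :=
  Xplus u y /\
  exists b : int -> bool,
    [/\ Xtilde u b,
        (forall i, i < size a -> b (GRing.add (Posz i) (GRing.opp (Posz (size a).-1))) = nth false a i)
      & forall k : nat, y k = b (Posz k)].

Definition significant (u : nat -> bool) (a : seq bool) : Prop :=
  lang u a /\
  (size a = 1 \/
   [/\ 2 <= size a,
       (forall y, fol u a y -> fol u (behead a) y)
     & exists y, fol u (behead a) y /\ ~ fol u a y]).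

Definition IsSig (u : nat -> bool) (a s : seq bool) : Prop :=
  [/\ suffix s a, significant u s
    & forall t, suffix t a -> significant u t -> size t <= size s].

Definition rightSpecial (u : nat -> bool) (v : seq bool) : Prop :=
  lang u (rcons v false) /\ lang u (rcons v true).

Definition leftSpecial (u : nat -> bool) (v : seq bool) : Prop :=
  lang u (false :: v) /\ lang u (true :: v).

Definition HBarrow (u : nat -> bool) (a b : seq bool) : Prop :=
  significant u a /\ exists c : bool, lang u (rcons a c) /\ IsSig u (rcons a c) b.

Definition consecRS (u : nat -> bool) (s t : seq bool) : Prop :=
  [/\ rightSpecial u s /\ significant u s, rightSpecial u t /\ significant u t,
      size s < size t
    & forall v, rightSpecial u v -> significant u v ->
        ~ (size s < size v /\ size v < size t)].

(* L_n = l_1 ... l_n, where l_k = l (k-1) *)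
Definition L (l : nat -> bool) (n : nat) : seq bool := mkseq l n.

Definition HBlisted (u l : nat -> bool) (a b : seq bool) : Prop :=
  (l 0 = false /\
     [\/ a = [:: false] /\ b = [:: true],
         a = [:: false] /\ b = [:: false; false]
       | a = [:: true] /\ b = [:: true; false]]) \/
  (l 0 = true /\
     [\/ a = [:: true] /\ b = [:: false],
         a = [:: true] /\ b = [:: true; true]
       | a = [:: false] /\ b = [:: false; true]]) \/
  (exists (x : bool) (n : nat), 1 <= n /\ a = x :: L l n /\ b = x :: L l n.+1) \/
  (exists (x w : bool) (n m : nat),
     [/\ m < n, consecRS u (w :: L l m) (x :: L l n), a = x :: L l n
       & ((x != w /\ b = w :: L l m.+1) \/
          (x = w /\ IsSig u (rcons (w :: L l m) (~~ l m)) b))]).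

(* A Sturmian sequence has exactly one right and one left special factor of each length and,
   by Morse-Hedlund, is aperiodic and recurrent; its left special factors are the prefixes L_n
   of l.  When L_m is also right special, every letter not following an occurrence of L_m is
   forced by the preceding window, so a return to L_m is determined by the letter after the
   occurrence.  Comparing returns shows that the next bispecial prefix is the block read after
   L_m l_m, that no prefix in between is right special, and that l_n L_n (~ l_n) occurs for
   each bispecial L_n.  A block x a is significant iff a is left special, i.e. a = L_n:
   otherwise the letter before a is forced in every two-sided point, while a right extension
   of L_n not occurring after x, completed to a two-sided point, separates fol(x L_n) from
   fol(L_n).  The arrows follow by computing sig(x L_n c): x L_(n+1) for c = l_n, and for
   c = ~ l_n a suffix of l_n L_n (~ l_n) determined by the bispecial prefixes below n. *)

From Stdlib Require ClassicalDescription.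
From Stdlib Require Import Classical.
From mathcomp Require Import all_boot all_order all_algebra zify.
Set Implicit Arguments. Unset Strict Implicit. Unset Printing Implicit Defensive.
Import GRing.Theory.

Definition window (v : nat -> bool) i n : seq bool := mkseq (fun j => v (i + j)) n.

Lemma size_window v i n : size (window v i n) = n.
Proof. by rewrite size_mkseq. Qed.

Lemma nth_window v i n j : j < n -> nth false (window v i n) j = v (i + j).
Proof. by move=> h; rewrite nth_mkseq. Qed.

Lemma windowS v i n : window v i n.+1 = rcons (window v i n) (v (i + n)).
Proof. by rewrite /window mkseqS. Qed.

Lemma eq_window (v : nat -> bool) a b n :
  (forall s, s < n -> v (a + s) = v (b + s)) -> window v a n = window v b n.
Proof.
move=> h; apply: (@eq_from_nth _ false); rewrite ?size_window // => s hs.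
by rewrite !nth_window // h.
Qed.

Lemma occursAtE v w i : occursAt v w i <-> window v i (size w) = w.
Proof.
split=> [h|h].
  apply: (@eq_from_nth _ false); first by rewrite size_window.
  by move=> j; rewrite size_window => hj; rewrite nth_window // h.
by move=> j hj; have := congr1 (nth false ^~ j) h; rewrite /= nth_window.
Qed.

Lemma occursAt_window v i n : occursAt v (window v i n) i.
Proof. by apply/occursAtE; rewrite size_window. Qed.

Lemma occursAt_catl v s t i : occursAt v (s ++ t) i -> occursAt v s i.
Proof. by move=> h j hj; rewrite h ?nth_cat ?hj // size_cat; lia. Qed.

Lemma occursAt_rcons v w c i :
  occursAt v w i -> v (i + size w) = c -> occursAt v (rcons w c) i.
Proof.
move=> ho hc j; rewrite size_rcons ltnS leq_eqVlt => /orP[/eqP->|hj].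
  by rewrite nth_rcons ltnn eqxx.
by rewrite nth_rcons hj ho.
Qed.

Lemma occursAt_cons v w c i :
  0 < i -> occursAt v w i -> v i.-1 = c -> occursAt v (c :: w) i.-1.
Proof.
move=> hi ho hc [|j] /= hj; first by rewrite addn0.
by rewrite -ho //; congr v; lia.
Qed.

Lemma occursAt_rconsE v w c i :
  occursAt v (rcons w c) i -> occursAt v w i /\ v (i + size w) = c.
Proof.
move=> h; split; first by move: h; rewrite -cats1 => /occursAt_catl.
by have := h (size w); rewrite size_rcons nth_rcons ltnn eqxx; apply.
Qed.

Lemma langE v w : lang v w <-> exists i, window v i (size w) = w.
Proof. by split=> -[i hi]; exists i; apply/occursAtE. Qed.

Lemma lang_window v i n : lang v (window v i n).
Proof. by exists i; apply: occursAt_window. Qed.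

Lemma lang_nil v : lang v [::].
Proof. by exists 0. Qed.

Lemma lang_catl v s t : lang v (s ++ t) -> lang v s.
Proof. by case=> i /occursAt_catl h; exists i. Qed.

Lemma lang_catr v s t : lang v (s ++ t) -> lang v t.
Proof.
case=> i h; exists (i + size s) => j hj.
have := h (size s + j); rewrite size_cat nth_cat ltn_add2l hj addKn addnA.
by rewrite ltnNge leq_addr => ->.
Qed.

Lemma lang_rcons v w c : lang v (rcons w c) -> lang v w.
Proof. by rewrite -cats1 => /lang_catl. Qed.

Lemma lang_cons v w c : lang v (c :: w) -> lang v w.
Proof. by rewrite -cat1s => /lang_catr. Qed.

Lemma lang_take v w k : lang v w -> lang v (take k w).
Proof. by rewrite -{1}(cat_take_drop k w) => /lang_catl. Qed.

Lemma lang_drop v w k : lang v w -> lang v (drop k w).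
Proof. by rewrite -{1}(cat_take_drop k w) => /lang_catr. Qed.

Lemma lang_rext v w : lang v w -> exists c, lang v (rcons w c).
Proof.
by case=> i h; exists (v (i + size w)), i; exact: occursAt_rcons.
Qed.

Definition langb v w : bool :=
  if ClassicalDescription.excluded_middle_informative (lang v w) then true else false.

Lemma langP v w : reflect (lang v w) (langb v w).
Proof.
by rewrite /langb; case: ClassicalDescription.excluded_middle_informative => h; constructor.
Qed.

Definition rspecialb v w := langb v (rcons w false) && langb v (rcons w true).
Definition lspecialb v w := langb v (false :: w) && langb v (true :: w).

Lemma rspecialP v w : reflect (rightSpecial v w) (rspecialb v w).
Proof. by rewrite /rspecialb; do 2!case: langP; constructor; rewrite /rightSpecial; tauto. Qed.

Lemma lspecialP v w : reflect (leftSpecial v w) (lspecialb v w).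
Proof. by rewrite /lspecialb; do 2!case: langP; constructor; rewrite /leftSpecial; tauto. Qed.

Lemma rspecial_letter v w c1 c2 :
  ~ rightSpecial v w -> lang v (rcons w c1) -> lang v (rcons w c2) -> c1 = c2.
Proof. by case: c1; case: c2 => // hn h1 h2; case: hn; split. Qed.

Lemma lspecial_letter v w c1 c2 :
  ~ leftSpecial v w -> lang v (c1 :: w) -> lang v (c2 :: w) -> c1 = c2.
Proof. by case: c1; case: c2 => // hn h1 h2; case: hn; split. Qed.

Fixpoint words n : seq (seq bool) :=
  if n is n'.+1 then [seq rcons w c | w <- words n', c <- [:: false; true]]
  else [:: [::]].

Lemma mem_words n w : (w \in words n) = (size w == n).
Proof.
elim: n w => [|n IH] w; first by rewrite /= inE; case: w.
apply/allpairsP/idP => [[[w' c] [h1 h2 ->]]|].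
  by rewrite size_rcons eqSS -IH.
case/lastP: w => [//|w c]; rewrite size_rcons eqSS => hw.
by exists (w, c); split => //; [rewrite IH | case: c].
Qed.

Lemma words_uniq n : uniq (words n).
Proof.
elim: n => [//|n IH]; apply: allpairs_uniq => //.
by move=> [w c] [w' c'] _ _ /= /eqP; rewrite eqseq_rcons => /andP[/eqP-> /eqP->].
Qed.

Lemma perm_words_cons n :
  perm_eq (words n.+1) [seq c :: w | w <- words n, c <- [:: false; true]].
Proof.
apply: uniq_perm; first exact: words_uniq.
  apply: allpairs_uniq => //; first exact: words_uniq.
  by move=> [w c] [w' c'] _ _ /= [-> ->].
move=> w; rewrite mem_words; apply/idP/allpairsP => [|[[w' c] [h1 h2 ->]]].
  case: w => [//|c w] /=; rewrite eqSS => hw; exists (w, c); split => //.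
    by rewrite mem_words.
  by case: c.
by rewrite /= eqSS -mem_words.
Qed.

Lemma count_allpairs_bool (P : pred (seq bool)) (f : seq bool -> bool -> seq bool) s :
  count P [seq f w c | w <- s, c <- [:: false; true]] =
  sumn [seq P (f w false) + P (f w true) | w <- s].
Proof. by elim: s => [//|w s IH]; rewrite /= IH; lia. Qed.

Lemma sumn_count T (a b : pred T) s :
  sumn [seq (a x : nat) + b x | x <- s] = count a s + count b s.
Proof. by elim: s => [//|x s IH] /=; rewrite IH; lia. Qed.

Lemma count_gt1 (T : eqType) (s : seq T) (P : pred T) x y :
  x \in s -> y \in s -> x != y -> P x -> P y -> 1 < count P s.
Proof.
move=> hx hy hxy px py; rewrite -size_filter.
have : {subset [:: x; y] <= filter P s}.
  by move=> z; rewrite !inE => /orP[]/eqP->; rewrite mem_filter ?px ?py ?hx ?hy.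
by move/uniq_leq_size; rewrite /= inE hxy => /(_ isT).
Qed.

Lemma sub_count_lt (T : eqType) (a b : pred T) (s : seq T) x :
  (forall z, a z -> b z) -> x \in s -> b x -> ~~ a x -> count a s < count b s.
Proof.
move=> hab; elim: s => [//|y s IH]; rewrite inE => /orP[/eqP<-|hx] hb ha /=.
  by have := sub_count hab s; rewrite hb (negbTE ha); lia.
by have := IH hx hb ha; case: (a y) (hab y) => [->//|_] /=; case: (b y) => /=; lia.
Qed.

Definition complexity v n := count (langb v) (words n).

Lemma complexity0 v : complexity v 0 = 1.
Proof. by rewrite /complexity /=; case: langP => // h; case: h; exact: lang_nil. Qed.

Lemma complexityS v n : complexity v n.+1 = complexity v n + count (rspecialb v) (words n).
Proof.
rewrite /complexity /= count_allpairs_bool -sumn_count; congr sumn; apply: eq_map => w.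
rewrite /rspecialb.
case: (langP v (rcons w false)) => h0; case: (langP v (rcons w true)) => h1 /=;
  case: (langP v w) => hw //; try by case: hw; apply: lang_rcons h0 || apply: lang_rcons h1.
by case: (lang_rext hw) => -[].
Qed.

Lemma complexityS_lext v n :
  (forall w, lang v w -> exists c, lang v (c :: w)) ->
  complexity v n.+1 = complexity v n + count (lspecialb v) (words n).
Proof.
move=> lext; rewrite /complexity (permP (perm_words_cons n)) count_allpairs_bool.
rewrite -sumn_count; congr sumn; apply: eq_map => w; rewrite /lspecialb.
case: (langP v (false :: w)) => h0; case: (langP v (true :: w)) => h1 /=;
  case: (langP v w) => hw //; try by case: hw; apply: lang_cons h0 || apply: lang_cons h1.
by case: (lext _ hw) => -[].
Qed.

Lemma complexityE v n : complexity v n = size (filter (langb v) (words n)).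
Proof. by rewrite size_filter. Qed.

Lemma complexity_le_of_periodic v p d : 0 < d ->
  (forall t, v (p + t + d) = v (p + t)) -> forall n, complexity v n <= p + d.
Proof.
move=> hd hp n.
have early i : exists2 i', i' < p + d & window v i' n = window v i n.
  elim/ltn_ind: i => i IH; case: (ltnP i (p + d)) => hi; first by exists i.
  have [i' h1 h2] := IH (i - d) ltac:(lia).
  exists i' => //; rewrite h2; apply: eq_window => j.
  have := hp (i - d - p + j); have -> : p + (i - d - p + j) + d = i + j by lia.
  by have -> : p + (i - d - p + j) = i - d + j by lia.
rewrite complexityE -(size_iota 0 (p + d)) -(size_map (fun i => window v i n)).
apply: uniq_leq_size; first by apply: filter_uniq; apply: words_uniq.
move=> w; rewrite mem_filter mem_words => /andP[/langP /langE [i hi] /eqP hs].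
have [i' h1 h2] := early i.
by apply/mapP; exists i'; [rewrite mem_iota | rewrite h2 -hs hi].
Qed.

Lemma eq_tails_of_window v k i j : (forall w, size w = k -> ~ rightSpecial v w) ->
  window v i k = window v j k -> forall t, v (i + t) = v (j + t).
Proof.
move=> noRS hw; elim/ltn_ind => t IH.
case: (ltnP t k) => htk; first by have := congr1 (nth false ^~ t) hw; rewrite /= !nth_window.
set w := window v (i + (t - k)) k.
have hw2 : window v (j + (t - k)) k = w.
  by apply: eq_window => x hx; rewrite -!addnA IH //; lia.
have ext x : lang v (rcons (window v (x + (t - k)) k) (v (x + t))).
  have -> : x + t = x + (t - k) + k by lia.
  by rewrite -windowS; exact: lang_window.
by apply: (rspecial_letter (noRS w (size_window _ _ _))); [exact: ext | rewrite -hw2; exact: ext].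
Qed.

Lemma window_repeats v k : exists i j, i < j /\ window v i k = window v j k.
Proof.
set s := map (fun i => window v i k) (iota 0 (complexity v k).+1).
have : ~~ uniq s.
  apply/negP => hu; have : size s <= size (filter (langb v) (words k)).
    apply: uniq_leq_size => // w /mapP [i _ ->].
    by rewrite mem_filter mem_words size_window eqxx andbT; apply/langP; exact: lang_window.
  by rewrite size_map size_iota -complexityE ltnn.
case/(uniqPn [::]) => i [j [hij hj]]; rewrite size_map size_iota in hj.
rewrite !(nth_map 0) ?size_iota ?nth_iota //; try lia.
by move=> h; exists i, j.
Qed.

Lemma periodic_of_complexity_le v N :
  complexity v N <= N -> exists p d, 0 < d /\ forall t, v (p + t + d) = v (p + t).
Proof.
move=> hN.
have [k hk] : exists k, count (rspecialb v) (words k) = 0.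
  apply: NNPP => hne.
  suff gtK K : K < complexity v K by have := gtK N; lia.
  elim: K => [|K IH]; first by rewrite complexity0.
  have : count (rspecialb v) (words K) <> 0 by move=> h; apply: hne; exists K.
  by rewrite complexityS; lia.
have noRS w : size w = k -> ~ rightSpecial v w.
  move=> hw /rspecialP hr; suff : 0 < count (rspecialb v) (words k) by rewrite hk.
  by rewrite -has_count; apply/hasP; exists w; rewrite ?mem_words ?hw.
have [i [j [hij hw]]] := window_repeats v k.
exists i, (j - i); split; first lia.
by move=> t; rewrite (eq_tails_of_window noRS hw) (_ : i + t + (j - i) = j + t) //; lia.
Qed.

Section Sturmian.
Variable u : nat -> bool.
Hypothesis hS : Sturmian u.

Lemma complexity_sturmian n : complexity u n = n.+1.
Proof.
case: n => [|n]; first exact: complexity0.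
have [s [hu hsz hm]] := hS (ltn0Sn n).
rewrite complexityE -hsz; apply: perm_size; apply: uniq_perm => //.
  by apply: filter_uniq; apply: words_uniq.
move=> w; rewrite mem_filter mem_words; apply/andP/idP.
  by case=> /langP h /eqP e; apply/hm.
by move/hm => [e h]; split; [apply/langP | apply/eqP].
Qed.

Lemma sturmian_aperiodic p d : 0 < d -> ~ (forall t, u (p + t + d) = u (p + t)).
Proof.
by move=> hd hp; have := complexity_le_of_periodic hd hp (p + d); rewrite complexity_sturmian ltnn.
Qed.

(* If the prefix of length k never reoccurred, the shifted sequence would miss a factor of
   length k + 1, hence have complexity at most k + 1 and be eventually periodic. *)
Lemma prefix_reoccurs k : exists2 j, 0 < j & occursAt u (window u 0 k) j.
Proof.
apply: NNPP => hne; pose v t := u t.+1.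
have hsub w : langb v w -> langb u w.
  by move=> /langP [i hi]; apply/langP; exists i.+1 => j hj; rewrite -hi // /v addSn.
have hx : ~~ langb v (window u 0 k.+1).
  apply/negP => /langP [i hi]; apply: hne; exists i.+1 => // j; rewrite size_window => hj.
  have := hi j; rewrite size_window ltnS => /(_ (ltnW hj)).
  by rewrite /v (nth_window _ _ hj) nth_window ?addSn //; lia.
have := sub_count_lt (s := words k.+1) hsub (x := window u 0 k.+1).
rewrite mem_words size_window eqxx hx => /(_ isT).
have -> : langb u (window u 0 k.+1) by apply/langP; exact: lang_window.
move=> /(_ isT isT); rewrite -/(complexity v _) -/(complexity u _) complexity_sturmian ltnS.
move=> /periodic_of_complexity_le [p [d [hd hp]]].
by apply: (sturmian_aperiodic (p := p.+1) hd) => t; have := hp t; rewrite /v addSn.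
Qed.

Lemma occursAt_later w p : occursAt u w p -> exists2 q, p < q & occursAt u w q.
Proof.
move=> ho; have [j hj hoc] := prefix_reoccurs (p + size w).
exists (p + j); first lia.
move=> x hx; rewrite -(ho x hx).
have := hoc (p + x); rewrite size_window nth_window; last lia.
by rewrite add0n addnA (addnC p j) => ->; lia.
Qed.

Lemma lang_lext w : lang u w -> exists c, lang u (c :: w).
Proof.
case=> p ho; have [q hq ho2] := occursAt_later ho.
by exists (u q.-1); exists q.-1; apply: occursAt_cons => //; lia.
Qed.

Lemma lang1 b : lang u [:: b].
Proof.
have := complexity_sturmian 1; rewrite /complexity /= addn0.
by case: (langP u [:: false]) => h0; case: (langP u [:: true]) => h1 //; case: b.
Qed.

Lemma count_rspecial n : count (rspecialb u) (words n) = 1.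
Proof. by have := complexityS u n; rewrite !complexity_sturmian; lia. Qed.

Lemma count_lspecial n : count (lspecialb u) (words n) = 1.
Proof. by have := complexityS_lext n lang_lext; rewrite !complexity_sturmian; lia. Qed.

Lemma rspecial_uniq v v' :
  rightSpecial u v -> rightSpecial u v' -> size v = size v' -> v = v'.
Proof.
move=> /rspecialP h /rspecialP h' e; apply: NNPP => /eqP ne.
have := count_gt1 (s := words (size v)) (P := rspecialb u) (x := v) (y := v').
by rewrite !mem_words e eqxx count_rspecial h h' ne; move/(_ isT isT isT isT isT).
Qed.

Lemma lspecial_uniq v v' :
  leftSpecial u v -> leftSpecial u v' -> size v = size v' -> v = v'.
Proof.
move=> /lspecialP h /lspecialP h' e; apply: NNPP => /eqP ne.
have := count_gt1 (s := words (size v)) (P := lspecialb u) (x := v) (y := v').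
by rewrite !mem_words e eqxx count_lspecial h h' ne; move/(_ isT isT isT isT isT).
Qed.

End Sturmian.

Section Returns.
Variable u : nat -> bool.
Hypothesis hS : Sturmian u.

Definition next_occ (w : seq bool) p q :=
  [/\ p < q, occursAt u w q & forall r, p < r -> r < q -> ~ occursAt u w r].

Lemma next_occ_exists w p : occursAt u w p -> exists q, next_occ w p q.
Proof.
move=> ho.
have ex : exists q, (p < q) && (window u q (size w) == w).
  have [q h1 h2] := occursAt_later hS ho.
  by exists q; rewrite h1; apply/eqP/occursAtE.
case: (ex_minnP ex) => q /andP[h1 /eqP /occursAtE h2] hmin; exists q; split => //.
move=> r hr1 hr2 /occursAtE hr; have := hmin r; rewrite hr1 hr eqxx => /(_ isT); lia.
Qed.

Lemma next_occ_uniq w p q q' : next_occ w p q -> next_occ w p q' -> q = q'.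
Proof.
move=> [a1 a2 a3] [b1 b2 b3]; case: (ltngtP q q') => // h.
- by case: (b3 q).
- by case: (a3 q').
Qed.

(* Away from occurrences of the right special word w each letter is forced by the
   preceding window of length [size w], so the letter following an occurrence of w
   determines the whole return to w. *)
Lemma return_determined w p p' q q' :
  rightSpecial u w -> occursAt u w p -> occursAt u w p' ->
  u (p + size w) = u (p' + size w) -> next_occ w p q -> next_occ w p' q' ->
  q' = p' + (q - p) /\ forall t, t < q - p + size w -> u (p + t) = u (p' + t).
Proof.
move=> hw hp hp' ht [hq1 hq2 hq3] hq'.
set m := size w in ht *.
have letters s : s < q - p + m -> u (p + s) = u (p' + s).
  elim/ltn_ind: s => s IH hs.
  case: (ltnP s m) => hsm; first by rewrite hp // hp'.
  case: (eqVneq s m) => [->//|hne].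
  set t := s - m.
  have e1 : window u (p' + t) m = window u (p + t) m.
    by apply: eq_window => x hx; rewrite -!addnA IH //; lia.
  have nw : ~ rightSpecial u (window u (p + t) m).
    move=> hr; apply: (hq3 (p + t)); [lia | lia | apply/occursAtE].
    by apply: (rspecial_uniq hS hr hw); rewrite size_window.
  have ext x : lang u (rcons (window u (x + t) m) (u (x + s))).
    have -> : x + s = x + t + m by lia.
    by rewrite -windowS; exact: lang_window.
  by apply: (rspecial_letter nw); [exact: ext | rewrite -e1; exact: ext].
split => //.
have occ' : occursAt u w (p' + (q - p)).
  apply/occursAtE; rewrite -/m; have := hq2 => /occursAtE <-.
  apply: eq_window => x hx.
  rewrite (_ : q + x = p + (q - p + x)); last lia.
  by rewrite -addnA; symmetry; apply: letters; lia.
apply: (next_occ_uniq hq'); split => //; first lia.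
move=> r hr1 hr2 /occursAtE hr; apply: (hq3 (p + (r - p'))); [lia | lia |].
apply/occursAtE; rewrite -/m -hr; apply: eq_window => x hx.
rewrite (_ : r + x = p' + (r - p' + x)); last lia.
by rewrite -addnA; apply: letters; lia.
Qed.

Lemma sturmian_not_block_periodic p0 D : 0 < D ->
  ~ (forall i r, r < D -> u (p0 + i * D + r) = u (p0 + r)).
Proof.
move=> hD h; apply: (sturmian_aperiodic hS (p := p0) hD) => T.
have hr : T %% D < D by rewrite ltn_mod.
have e := divn_eq T D.
rewrite (_ : p0 + T + D = p0 + (T %/ D).+1 * D + T %% D); last by rewrite mulSn; lia.
by rewrite (_ : p0 + T = p0 + T %/ D * D + T %% D) ?h //; lia.
Qed.

End Returns.

Lemma size_L l n : size (L l n) = n.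
Proof. exact: size_mkseq. Qed.

Lemma L_S l n : L l n.+1 = rcons (L l n) (l n).
Proof. exact: mkseqS. Qed.

Lemma nth_L l n i : i < n -> nth false (L l n) i = l i.
Proof. by move=> h; rewrite nth_mkseq. Qed.

Lemma L_cat l k n : k <= n -> L l n = L l k ++ drop k (L l n).
Proof.
move=> h; rewrite -{1}(cat_take_drop k (L l n)); congr (_ ++ _).
have hs : size (take k (L l n)) = k by rewrite size_takel // size_L.
apply: (@eq_from_nth _ false); rewrite hs ?size_L // => i hi.
by rewrite nth_take // !nth_L //; lia.
Qed.

Definition wext (l : nat -> bool) n := rcons (l n :: L l n) (~~ l n).

Section LeftSpecial.
Variable u : nat -> bool.
Hypothesis hS : Sturmian u.
Variable l : nat -> bool.
Hypothesis hl : forall n, leftSpecial u (L l n).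

Lemma lang_xL x n : lang u (x :: L l n).
Proof. by case: (hl n); case: x. Qed.

Lemma lang_L n : lang u (L l n).
Proof. exact: lang_cons (lang_xL true n). Qed.

Lemma lspecialE w : leftSpecial u w -> w = L l (size w).
Proof. by move=> h; apply: (lspecial_uniq hS h (hl _)); rewrite size_L. Qed.

Lemma rspecial_L0 : rightSpecial u (L l 0).
Proof. by split; apply: lang1. Qed.

Lemma occursAt_L_prefix k m r : m <= k -> occursAt u (L l k) r -> occursAt u (L l m) r.
Proof. by move=> h; rewrite (L_cat l h) => /occursAt_catl. Qed.

Lemma occursAt_L_nth k r j : occursAt u (L l k) r -> j < k -> u (r + j) = l j.
Proof. by move=> h hj; rewrite h ?size_L // nth_L. Qed.

Lemma occursAt_L_next m : exists p, occursAt u (L l m) p /\ u (p + m) = l m.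
Proof.
have [p] := lang_L m.+1; rewrite L_S => /occursAt_rconsE [hp hpm].
by rewrite size_L in hpm; exists p.
Qed.

Definition mirror_returns m := forall p q,
  occursAt u (L l m) p -> next_occ u (L l m) p q -> u q.-1 = u (p + m).

Lemma return_determined_L m p p' q q' :
  rightSpecial u (L l m) -> occursAt u (L l m) p -> occursAt u (L l m) p' ->
  u (p + m) = u (p' + m) -> next_occ u (L l m) p q -> next_occ u (L l m) p' q' ->
  q' = p' + (q - p) /\ forall t, t < q - p + m -> u (p + t) = u (p' + t).
Proof.
move=> hm hp hp' ht hq hq'.
have ht' : u (p + size (L l m)) = u (p' + size (L l m)) by rewrite size_L.
by have := return_determined hS hm hp hp' ht' hq hq'; rewrite size_L.
Qed.

(* Otherwise the returns to L_m, all alike, would make u periodic. *)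
Lemma not_always_followed m : rightSpecial u (L l m) ->
  ~ (forall p q, occursAt u (L l m) p -> u (p + m) = l m ->
       next_occ u (L l m) p q -> u (q + m) = l m).
Proof.
move=> hm hA; have [p0 [hp0 ht0]] := occursAt_L_next m.
have [q0 hq0] := next_occ_exists hS hp0.
set D := q0 - p0; have hD : 0 < D by case: hq0; rewrite /D; lia.
have chain i : [/\ occursAt u (L l m) (p0 + i * D), u (p0 + i * D + m) = l m
                 & next_occ u (L l m) (p0 + i * D) (p0 + i.+1 * D)].
  elim: i => [|i [h1 h2 h3]].
    rewrite mul0n addn0 mul1n (_ : p0 + D = q0) //; case: hq0; rewrite /D; lia.
  have [_ h5 _] := h3; have h7 := hA _ _ h1 h2 h3.
  have [q' hq'] := next_occ_exists hS h5.
  have [e1 _] := return_determined_L hm hp0 h5 (etrans ht0 (esym h7)) hq0 hq'.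
  by split => //; rewrite (_ : p0 + i.+2 * D = q'); [| rewrite e1 mulSn; lia].
apply: (sturmian_not_block_periodic hS (p0 := p0) hD) => i r hr.
have [h1 h2 _] := chain i; have [q' hq'] := next_occ_exists hS h1.
have [_ e2] := return_determined_L hm hp0 h1 (etrans ht0 (esym h2)) hq0 hq'.
by rewrite -e2 //; lia.
Qed.

Lemma lang_wext_of_mirror m : rightSpecial u (L l m) -> mirror_returns m ->
  lang u (wext l m).
Proof.
rewrite /wext rcons_cons => hm hmir; apply: NNPP => hne; apply: (not_always_followed hm) => p q hp ht hq.
have [hq1 hq2 _] := hq.
case: (boolP (u (q + m) == l m)) => [/eqP//|/negPf hflip]; case: hne.
exists q.-1; apply: occursAt_cons; [lia | apply: occursAt_rcons => // | by rewrite (hmir _ _ hp hq)].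
by rewrite size_L; case: (u _) hflip; case: (l m).
Qed.

Lemma not_lang_flip_L_flip m : rightSpecial u (L l m) -> mirror_returns m ->
  ~ lang u (~~ l m :: rcons (L l m) (~~ l m)).
Proof.
move=> hm hmir h; have := lang_wext_of_mirror hm hmir; rewrite /wext rcons_cons => h2.
have hls : leftSpecial u (rcons (L l m) (~~ l m)) by case: (l m) h h2 => /= ha hb; split.
have := lspecialE hls; rewrite size_rcons size_L L_S => /eqP.
by rewrite eqseq_rcons eqxx /=; case: (l m).
Qed.

End LeftSpecial.

Section NextBispecial.
Variable u : nat -> bool.
Hypothesis hS : Sturmian u.
Variable l : nat -> bool.
Hypothesis hl : forall n, leftSpecial u (L l n).
Variable m : nat.
Hypothesis hm : rightSpecial u (L l m).
Hypothesis hmir : mirror_returns u l m.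
Variables p0 q0 : nat.
Hypothesis hp0 : occursAt u (L l m) p0.
Hypothesis ht0 : u (p0 + m) = l m.
Hypothesis hq0 : next_occ u (L l m) p0 q0.

Local Notation n := (q0 - p0 + m).
Local Notation rho := (window u p0 n).

Lemma flip_then_lm p q : occursAt u (L l m) p -> u (p + m) = ~~ l m ->
  next_occ u (L l m) p q -> u (q + m) = l m.
Proof.
move=> hp ht hq; have [hq1 hq2 _] := hq.
case: (boolP (u (q + m) == l m)) => [/eqP//|hne]; exfalso.
apply: (not_lang_flip_L_flip hS hl hm hmir); exists q.-1.
apply: occursAt_cons; [lia | apply: occursAt_rcons => // | by rewrite (hmir hp hq)].
by rewrite size_L; case: (u _) hne; case: (l m).
Qed.

Lemma return_lm p q : occursAt u (L l m) p -> u (p + m) = l m ->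
  next_occ u (L l m) p q -> q = p + (q0 - p0) /\ window u p n = rho.
Proof.
move=> hp ht hq; have [e1 e2] := return_determined_L hS hm hp0 hp (etrans ht0 (esym ht)) hq0 hq.
by split => //; apply: eq_window => s hs; rewrite e2.
Qed.

(* If returns after [l m] always led to [~~ l m], the returns would alternate with
   period (q0 - p0) + (q2 - q0), making u periodic. *)
Lemma lm_return_lm : exists p q, [/\ occursAt u (L l m) p, u (p + m) = l m,
  next_occ u (L l m) p q & u (q + m) = l m].
Proof.
apply: NNPP => hne.
have hB p q : occursAt u (L l m) p -> u (p + m) = l m -> next_occ u (L l m) p q ->
    u (q + m) = ~~ l m.
  move=> hp ht hq; case: (boolP (u (q + m) == l m)) => [/eqP h|].
    by case: hne; exists p, q.
  by case: (u _); case: (l m).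
have [hq01 hq02 _] := hq0; have ht1 := hB _ _ hp0 ht0 hq0.
have [q2 hq2] := next_occ_exists hS hq02; have [hq21 hq22 _] := hq2.
set DA := q0 - p0; set D := DA + (q2 - q0).
have hD : 0 < D by rewrite /D; lia.
have chain i : [/\ occursAt u (L l m) (p0 + i * D), u (p0 + i * D + m) = l m,
    next_occ u (L l m) (p0 + i * D) (p0 + i * D + DA), u (p0 + i * D + DA + m) = ~~ l m
  & next_occ u (L l m) (p0 + i * D + DA) (p0 + i.+1 * D)].
  elim: i => [|i [h1 h2 h3 h4 h5]].
    have e1 : p0 + DA = q0 by rewrite /DA; lia.
    have e2 : p0 + D = q2 by rewrite /D /DA; lia.
    by rewrite mul0n addn0 mul1n e1 e2; split.
  have [_ h32 _] := h3; have [_ h52 _] := h5.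
  have t1 := flip_then_lm h32 h4 h5.
  have [q' hq'] := next_occ_exists hS h52; have [hq'1 hq'2 _] := hq'.
  have [e1 _] := return_lm h52 t1 hq'.
  have [q'' hq''] := next_occ_exists hS hq'2.
  have t2 := hB _ _ h52 t1 hq'.
  have [e3 _] := return_determined_L hS hm hq02 hq'2 (etrans ht1 (esym t2)) hq2 hq''.
  have e4 : q' = p0 + i.+1 * D + DA by rewrite e1 /DA.
  have e5 : q'' = p0 + i.+2 * D by rewrite e3 e4 (mulSn _ D) /D; lia.
  by rewrite -e4 -e5; split.
apply: (sturmian_not_block_periodic hS (p0 := p0) hD) => i r hr.
have [h1 h2 h3 h4 h5] := chain i.
case: (ltnP r DA) => hr2.
  have [_ e2] := return_determined_L hS hm hp0 h1 (etrans ht0 (esym h2)) hq0 h3.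
  by rewrite -e2 //; lia.
have [_ h32 _] := h3.
have [_ e2] := return_determined_L hS hm hq02 h32 (etrans ht1 (esym h4)) hq2 h5.
rewrite (_ : p0 + i * D + r = p0 + i * D + DA + (r - DA)); last lia.
by rewrite -e2; [congr u; rewrite /DA; lia | rewrite /D /DA in hr *; lia].
Qed.

Lemma lm_return_flip : exists p q, [/\ occursAt u (L l m) p, u (p + m) = l m,
  next_occ u (L l m) p q & u (q + m) = ~~ l m].
Proof.
apply: NNPP => hne; apply: (not_always_followed hS hl hm) => p q hp ht hq.
case: (boolP (u (q + m) == l m)) => [/eqP//|h]; case: hne; exists p, q; split => //.
by case: (u _) h; case: (l m).
Qed.

Lemma flip_before_lm : exists q, [/\ 0 < q, occursAt u (L l m) q, u (q + m) = l m
  & u q.-1 = ~~ l m].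
Proof.
have [pB /occursAt_rconsE [hpB htB]] : lang u (rcons (L l m) (~~ l m)).
  by case: hm; case: (l m).
rewrite size_L in htB; have [qB hqB] := next_occ_exists hS hpB; have [hqB1 hqB2 _] := hqB.
by exists qB; split; [lia | | exact: flip_then_lm hpB htB hqB | rewrite (hmir hpB hqB)].
Qed.

Lemma occursAt_rho q : occursAt u (L l m) q -> u (q + m) = l m -> occursAt u rho q.
Proof.
move=> hq ht; have [q' hq'] := next_occ_exists hS hq; have [_ e] := return_lm hq ht hq'.
by apply/occursAtE; rewrite size_window.
Qed.

(* rho is read after occurrences of L_m preceded by [l m] and by [~~ l m]. *)
Lemma rho_eq_L : rho = L l n.
Proof.
suff h : leftSpecial u rho by rewrite {1}(lspecialE hS hl h) size_window.
have [p [q [hp ht hq htq]]] := lm_return_lm; have [hq1 hq2 _] := hq.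
have [q' [hq' hoq' htq' hfq']] := flip_before_lm.
have la : lang u (l m :: rho).
  by exists q.-1; apply: occursAt_cons; [lia | exact: occursAt_rho | rewrite (hmir hp hq)].
have lb : lang u (~~ l m :: rho) by exists q'.-1; apply: occursAt_cons => //; exact: occursAt_rho.
by move: la lb; case: (l m) => ha hb; split.
Qed.

Lemma rspecial_rho : rightSpecial u (L l n).
Proof.
have ext p q c : occursAt u (L l m) p -> u (p + m) = l m -> next_occ u (L l m) p q ->
    u (q + m) = c -> lang u (rcons rho c).
  move=> hp ht hq hc; have [e1 _] := return_lm hp ht hq.
  exists p; apply: occursAt_rcons; first exact: occursAt_rho.
  by rewrite size_window -hc e1 addnA.
have [p [q [hp ht hq htq]]] := lm_return_lm; have la := ext _ _ _ hp ht hq htq.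
have [p' [q' [hp' ht' hq' htq']]] := lm_return_flip; have lb := ext _ _ _ hp' ht' hq' htq'.
by rewrite -rho_eq_L; move: la lb; case: (l m) => ha hb; split.
Qed.

Lemma occursAt_Ln q : occursAt u (L l m) q -> u (q + m) = l m -> occursAt u (L l n) q.
Proof. by rewrite -rho_eq_L; exact: occursAt_rho. Qed.

Lemma mirror_returns_rho : mirror_returns u l n.
Proof.
move=> p q hp hq; have hmn : m <= n by lia.
have [hq01 _ _] := hq0.
have hpm := occursAt_L_prefix hmn hp.
have hpt : u (p + m) = l m by apply: (occursAt_L_nth hp); lia.
have [q1 hq1] := next_occ_exists hS hpm; have [e1 _] := return_lm hpm hpt hq1.
have [hq11 hq12 hq13] := hq1.
have hpn : p + n = q1 + m by rewrite e1; lia.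
case: (boolP (u (q1 + m) == l m)) => [/eqP ht1|ht1].
  have hN : next_occ u (L l n) p q1.
    split => //; first exact: occursAt_Ln.
    by move=> r hr1 hr2 hr; apply: (hq13 r) => //; exact: occursAt_L_prefix hmn hr.
  by rewrite (next_occ_uniq hq hN) (hmir hpm hq1) hpt hpn ht1.
have ht1' : u (q1 + m) = ~~ l m by case: (u _) ht1; case: (l m).
have [q2 hq2] := next_occ_exists hS hq12; have [hq21 hq22 hq23] := hq2.
have hN : next_occ u (L l n) p q2.
  split; [lia | exact: occursAt_Ln (flip_then_lm hq12 ht1' hq2) |].
  move=> r hr1 hr2 hr; have hrt : u (r + m) = l m by apply: (occursAt_L_nth hr); lia.
  case: (ltngtP r q1) => h.
  - exact: (hq13 r _ _ (occursAt_L_prefix hmn hr)).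
  - exact: (hq23 r _ _ (occursAt_L_prefix hmn hr)).
  - by move: hrt; rewrite h ht1'; case: (l m).
by rewrite (next_occ_uniq hq hN) (hmir hq12 hq2) hpn.
Qed.

Lemma no_rspecial_below_rho k : m < k -> k < n -> ~ rightSpecial u (L l k).
Proof.
move=> hk1 hk2 [hk3 hk4].
suff forced c : lang u (rcons (L l k) c) -> c = l k by have := forced _ hk4; rewrite -(forced _ hk3).
case=> r /occursAt_rconsE [hr hrc]; rewrite size_L in hrc.
have hrm := occursAt_L_prefix (ltnW hk1) hr.
have [q hq] := next_occ_exists hS hrm.
have [_ e] := return_lm hrm (occursAt_L_nth hr hk1) hq.
by have := congr1 (nth false ^~ k) e; rewrite /= nth_window // rho_eq_L nth_L // hrc.
Qed.

End NextBispecial.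

Section Bispecial.
Variable u : nat -> bool.
Hypothesis hS : Sturmian u.
Variable l : nat -> bool.
Hypothesis hl : forall n, leftSpecial u (L l n).

Lemma next_bispecial m : rightSpecial u (L l m) -> mirror_returns u l m ->
  exists n, [/\ m < n, rightSpecial u (L l n), mirror_returns u l n
              & forall k, m < k -> k < n -> ~ rightSpecial u (L l k)].
Proof.
move=> hm hmir; have [p0 [hp0 ht0]] := occursAt_L_next hl m.
have [q0 hq0] := next_occ_exists hS hp0; have [hq01 _ _] := hq0.
exists (q0 - p0 + m); split; first lia.
- exact: (rspecial_rho hS hl hm hmir hp0 ht0 hq0).
- exact: (mirror_returns_rho hS hl hm hmir hp0 ht0 hq0).
- exact: (no_rspecial_below_rho hS hl hm hmir hp0 ht0 hq0).
Qed.

Lemma prev_rspecial n : 0 < n -> exists m, [/\ m < n, rightSpecial u (L l m)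
  & forall k, m < k -> k < n -> ~ rightSpecial u (L l k)].
Proof.
move=> hn; have ex : exists k, (k < n) && rspecialb u (L l k).
  by exists 0; rewrite hn; apply/rspecialP; exact: rspecial_L0.
have ub k : (k < n) && rspecialb u (L l k) -> k <= n by case/andP => /ltnW.
case: (ex_maxnP ex ub) => m /andP[h1 /rspecialP h2] hmax; exists m; split => // k hk1 hk2 hk3.
by have := hmax k; rewrite hk2 (introT (rspecialP _ _) hk3) => /(_ isT); lia.
Qed.

Lemma mirror_returns0 : mirror_returns u l 0.
Proof.
move=> p q hp hq; have hN : next_occ u (L l 0) p p.+1.
  by split => [//|j|r]; [rewrite size_L | lia].
by rewrite (next_occ_uniq hq hN) addn0.
Qed.

Lemma mirror_returns_rspecial n : rightSpecial u (L l n) -> mirror_returns u l n.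
Proof.
elim/ltn_ind: n => -[_ _|n IH hn]; first exact: mirror_returns0.
have [m [hm hrm hgap]] := prev_rspecial (ltn0Sn n).
have [n' [h1 h2 h3 h4]] := next_bispecial hrm (IH m hm hrm).
case: (ltngtP n.+1 n') => h; last by rewrite h.
- by case: (h4 n.+1).
- by case: (hgap n').
Qed.

Lemma lang_wext n : rightSpecial u (L l n) -> lang u (wext l n).
Proof. by move=> h; apply: (lang_wext_of_mirror hS hl h (mirror_returns_rspecial h)). Qed.

End Bispecial.

Lemma XplusE u y : Xplus u y <-> forall k, lang u (mkseq y k).
Proof.
split=> h k; have [n hn] := h k; exists n => j.
  by rewrite size_mkseq => hj; rewrite nth_mkseq //; exact: hn.
by move=> hj; have := hn j; rewrite size_mkseq nth_mkseq //; exact.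
Qed.

Lemma XtildeE u b :
  Xtilde u b <-> forall (p : int) k, lang u (mkseq (fun t => b (p + Posz t)%R) k).
Proof. by split=> h p; [have /XplusE := h p | apply/XplusE]. Qed.

Lemma Xtilde_shift u b (s : int) : Xtilde u b -> Xtilde u (fun z => b (z + s)%R).
Proof.
move/XtildeE => h; apply/XtildeE => p k.
by have := h (p + s)%R k; congr lang; apply: eq_mkseq => t; congr b; lia.
Qed.

Section TwoSidedExtension.
Variable u : nat -> bool.
Hypothesis hS : Sturmian u.

Definition grow_letters (w : seq bool) : bool * bool :=
  let cands := [:: (false, false); (false, true); (true, false); (true, true)] in
  nth (false, false) cands (find (fun cd => langb u (cd.1 :: rcons w cd.2)) cands).

Definition grow w := (grow_letters w).1 :: rcons w (grow_letters w).2.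

Lemma lang_grow w : lang u w -> lang u (grow w).
Proof.
move=> hw; have [d hd] := lang_rext hw; have [c hc] := lang_lext hS hd.
rewrite /grow /grow_letters; set P := (fun cd : bool * bool => langb u (cd.1 :: rcons w cd.2)).
have hh : has P [:: (false, false); (false, true); (true, false); (true, true)].
  by apply/hasP; exists (c, d); [case: c {hc}; case: d {hd} | apply/langP].
by have /langP := nth_find (false, false) hh.
Qed.

Lemma nth_grow w i : i < size w -> nth false (grow w) i.+1 = nth false w i.
Proof. by move=> h; rewrite /grow /= nth_rcons h. Qed.

Variable W : seq bool.
Hypothesis hW : lang u W.

Local Notation Wg j := (iter j grow W).

Lemma size_Wg j : size (Wg j) = size W + j.*2.
Proof. by elim: j => [|j IH] /=; rewrite ?addn0 // size_rcons IH doubleS; lia. Qed.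

Lemma nth_Wg j t i : i < size (Wg j) -> nth false (Wg (j + t)) (i + t) = nth false (Wg j) i.
Proof.
elim: t => [|t IH] h; first by rewrite !addn0.
by rewrite !addnS iterS nth_grow ?IH // !size_Wg; rewrite size_Wg in h; lia.
Qed.

Lemma nth_Wg_eq j i j' i' : i + j' = i' + j -> i < size (Wg j) -> i' < size (Wg j') ->
  nth false (Wg j) i = nth false (Wg j') i'.
Proof.
move=> e h h'; case: (leqP j j') => hj.
  have -> : j' = j + (j' - j) by lia.
  have -> : i' = i + (j' - j) by lia.
  by rewrite nth_Wg.
have -> : j = j' + (j - j') by lia.
have -> : i = i' + (j - j') by lia.
by rewrite nth_Wg.
Qed.

(* [Wg j] is W extended by j letters on each side; position z is read in [Wg k.+1],
   which contains it, for z = k or z = -k-1. *)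
Definition limW (z : int) : bool :=
  match z with
  | Posz k => nth false (Wg k.+1) (k + k.+1)
  | Negz k => nth false (Wg k.+1) 0
  end.

Lemma limW_nth j s : s < size (Wg j) -> limW (Posz s - Posz j)%R = nth false (Wg j) s.
Proof.
move=> h; have h' := h; rewrite size_Wg in h'; case: (leqP j s) => hjs.
  have -> : (Posz s - Posz j)%R = Posz (s - j) by lia.
  by apply: nth_Wg_eq; rewrite ?size_Wg //; lia.
have -> : (Posz s - Posz j)%R = Negz (j - s).-1 by rewrite NegzE; lia.
by apply: nth_Wg_eq; rewrite ?size_Wg //; lia.
Qed.

Lemma limW_Xtilde : Xtilde u limW.
Proof.
apply/XtildeE => p k.
have [j [x [e hx]]] : exists j x, (forall t : nat, (p + Posz t)%R = (Posz (x + t) - Posz j)%R)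
    /\ x + k <= size (Wg j).
  case: p => a; [exists (a + k), (a + (a + k)) | exists (a.+1 + k), k].
    by split; [move=> t; lia | rewrite size_Wg; lia].
  by split; [move=> t; rewrite NegzE; lia | rewrite size_Wg; lia].
have -> : mkseq (fun t => limW (p + Posz t)%R) k = take k (drop x (Wg j)).
  apply: (@eq_from_nth _ false).
    by rewrite size_mkseq size_take size_drop; case: ltnP; lia.
  move=> i; rewrite size_mkseq => hi.
  by rewrite nth_mkseq // nth_take // nth_drop e limW_nth //; lia.
apply: lang_take; apply: lang_drop.
by elim: j {e hx} => [|j IH] //=; exact: lang_grow.
Qed.

End TwoSidedExtension.

Lemma Xtilde_of_lang u W : Sturmian u -> lang u W ->
  exists b, Xtilde u b /\ forall i, i < size W -> b (Posz i) = nth false W i.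
Proof.
move=> hS hW; exists (limW u W); split; first exact: limW_Xtilde.
by move=> i hi; have := limW_nth (u := u) (W := W) (j := 0) (s := i); rewrite subr0; apply; rewrite size_Wg addn0.
Qed.

Lemma fol_behead u c a y : a != [::] -> fol u (c :: a) y -> fol u a y.
Proof.
move=> ha [hy [b [hb h1 h2]]]; split => //; exists b; split => // i hi.
have := h1 i.+1; rewrite /= ltnS => /(_ hi) <-.
by congr b; case: a ha hi {h1} => [//|a0 a] _ hi /=; lia.
Qed.

Section Significance.
Variable u : nat -> bool.
Hypothesis hS : Sturmian u.
Variable l : nat -> bool.
Hypothesis hl : forall n, leftSpecial u (L l n).

(* Right extensions of [~~ x :: L l n] all stay left special, hence are prefixes of l. *)
Lemma followed_by_l n x : (forall v, lang u (L l n ++ v) -> lang u (x :: L l n ++ v)) ->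
  forall p, occursAt u (~~ x :: L l n) p -> forall t, u (p.+1 + t) = l t.
Proof.
move=> hx p hp t.
have hpre : take n (window u p.+1 (t.+1 + n)) = L l n.
  apply: (@eq_from_nth _ false); first by rewrite size_takel ?size_window ?size_L //; lia.
  move=> i; rewrite size_takel ?size_window => [hi|]; last lia.
  rewrite nth_take // nth_window; last lia.
  by rewrite addSn -addnS (hp i.+1) //= size_L.
set v := drop n (window u p.+1 (t.+1 + n)).
have e : window u p.+1 (t.+1 + n) = L l n ++ v by rewrite -hpre cat_take_drop.
have hxv : lang u (~~ x :: L l n ++ v).
  rewrite -e; exists p => -[|j]; first by move=> _; exact: (hp 0).
  move=> hj; have hj' : j < t.+1 + n by move: hj; rewrite -cat1s size_cat size_window.
  by rewrite -addSnnS -(nth_window _ _ hj').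
have hls : leftSpecial u (L l n ++ v).
  by move: hxv (hx _ (lang_cons hxv)); case: x {hx hp} => ha hb; split.
have : window u p.+1 (t.+1 + n) = L l (t.+1 + n).
  by rewrite e (lspecialE hS hl hls) size_cat size_L size_drop size_window; congr L; lia.
by move/(congr1 (nth false ^~ t)); rewrite nth_window ?nth_L //; lia.
Qed.

Lemma L_separating_ext n x : exists v, lang u (L l n ++ v) /\ ~ lang u (x :: L l n ++ v).
Proof.
apply: NNPP => H.
have hx v : lang u (L l n ++ v) -> lang u (x :: L l n ++ v).
  by move=> hv; apply: NNPP => hnv; apply: H; exists v.
have [p hp] : lang u (~~ x :: L l n) by case: (hl n); case: x {H hx}.
have [q hq hq'] := occursAt_later hS hp.
apply: (sturmian_aperiodic hS (p := p.+1) (d := q - p)); first lia.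
move=> t; rewrite (_ : p.+1 + t + (q - p) = q.+1 + t); last lia.
by rewrite (followed_by_l hx hp) (followed_by_l hx hq').
Qed.

Lemma fol_L_strict n x : 1 <= n -> exists y, fol u (L l n) y /\ ~ fol u (x :: L l n) y.
Proof.
move=> hn; have [v [hv hnv]] := L_separating_ext n x.
have [b [hb hbv]] := Xtilde_of_lang hS hv.
pose b' z := b (z + Posz n.-1)%R.
have hb' : Xtilde u b' by apply: Xtilde_shift.
exists (fun k => b' (Posz k)); split.
  split.
    apply/XplusE => k; move/XtildeE/(_ 0%R k): hb'.
    by rewrite (eq_mkseq (g := fun t => b' (Posz t))) // => t; rewrite add0r.
  exists b'; split => // i hi; rewrite size_L in hi *.
  rewrite /b' (_ : (Posz i - Posz n.-1 + Posz n.-1)%R = Posz i) ?hbv ?nth_cat ?size_L ?hi //.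
    by rewrite size_cat size_L; lia.
  by rewrite subrK.
move=> [_ [b'' [hX h1 h2]]]; apply: hnv.
have /XtildeE := hX; move/(_ (- Posz n)%R (n.+1 + size v)); congr lang.
apply: (@eq_from_nth _ false); first by rewrite size_mkseq /= size_cat size_L.
move=> t; rewrite size_mkseq => ht; rewrite nth_mkseq //.
case: (leqP t n) => htn.
  rewrite -cat_cons nth_cat /= size_L ltnS htn.
  by have := h1 t; rewrite /= size_L ltnS => /(_ htn) <-; congr b''; lia.
rewrite (_ : (- Posz n + Posz t)%R = Posz (t - n)); last lia.
rewrite -h2 /b' (_ : (Posz (t - n) + Posz n.-1)%R = Posz t.-1); last lia.
rewrite hbv; last by rewrite size_cat size_L; lia.
by case: t ht htn => [|t] //= _ _; lia.
Qed.

(* If [a] were not left special, the letter before [a] in any two-sided point would be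
   forced to be [c], so [fol (c :: a) = fol a]. *)
Lemma significant_lspecial c a : lang u (c :: a) -> a != [::] ->
  (exists y, fol u a y /\ ~ fol u (c :: a) y) -> leftSpecial u a.
Proof.
move=> hca /negbTE ha [y [[hyX [b [hb h1 h3]]] hny]]; apply: NNPP => hn; apply: hny.
have hsa : 0 < size a by rewrite lt0n size_eq0 ha.
split => //; exists b; split => // i hi.
pose d := b (- Posz (size a))%R.
have hda : lang u (d :: a).
  have /XtildeE := hb; move/(_ (- Posz (size a))%R (size a).+1); congr lang.
  apply: (@eq_from_nth _ false); first by rewrite size_mkseq.
  move=> t; rewrite size_mkseq => ht; rewrite nth_mkseq //.
  case: t ht => [|t] ht /=; first by rewrite /d addr0.
  by rewrite -h1; [congr b; lia | lia].
have hdc : d = c by apply: (lspecial_letter hn hda hca).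
case: i hi => [|i] hi /=; first by rewrite -hdc /d; congr b; lia.
by rewrite -h1; [congr b; lia | move: hi => /=; lia].
Qed.

Lemma significantE v : significant u v <->
  lang u v /\ (size v = 1 \/ exists x n, 1 <= n /\ v = x :: L l n).
Proof.
split.
  case=> hv [h1|[h2 _ hsep]]; split => //; first by left.
  right.
  case: v hv h2 hsep => [//|c a] hv h2 hsep.
  have ha : a != [::] by case: a h2 {hv hsep}.
  have hLS := significant_lspecial hv ha hsep.
  by exists c, (size a); rewrite -(lspecialE hS hl hLS); split => //; case: a ha {hv h2 hsep hLS}.
case=> hv [h1|[x [n [hn ev]]]]; split => //; first by left.
subst v; right; split.
- by rewrite /= size_L; lia.
- by move=> y; apply: fol_behead; case: n hn {hv}.
- have [y [h1 h2]] := fol_L_strict x hn; by exists y.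
Qed.

End Significance.

Lemma IsSig_uniq u w b b' : IsSig u w b -> IsSig u w b' -> b = b'.
Proof.
move=> [s1 g1 m1] [s2 g2 m2].
have e : size b = size b' by apply/eqP; rewrite eqn_leq m1 // m2.
by move: s1 s2; rewrite !suffixE e => /eqP <- /eqP.
Qed.

Lemma IsSig_refl u w : significant u w -> IsSig u w w.
Proof. by move=> h; split => // [|t /size_suffix //]; exact: suffix_refl. Qed.

Lemma rspecial_drop u w k : Sturmian u -> rightSpecial u w -> rightSpecial u (drop k w).
Proof.
move=> hS [h0 h1]; case: (leqP k (size w)) => hk.
  by split; rewrite -drop_rcons //; exact: lang_drop.
by rewrite drop_oversize; [split; exact: lang1 | lia].
Qed.

Section HBDiagram.
Variable u : nat -> bool.
Hypothesis hS : Sturmian u.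
Variable l : nat -> bool.
Hypothesis hl : forall n, leftSpecial u (L l n).

Lemma size_xL x n : size (x :: L l n) = n.+1.
Proof. by rewrite /= size_L. Qed.

Lemma significant_xL x n : 1 <= n -> significant u (x :: L l n).
Proof. by move=> hn; apply/(significantE hS hl); split; [exact: lang_xL | right; exists x, n]. Qed.

Lemma significant1 b : significant u [:: b].
Proof. by apply/(significantE hS hl); split; [exact: lang1 | left]. Qed.

Lemma lext_wext_uniq n a b :
  lang u (a :: rcons (L l n) (~~ l n)) -> lang u (b :: rcons (L l n) (~~ l n)) -> a = b.
Proof.
move=> ha hb; apply: (lspecial_letter _ ha hb) => hls.
have := lspecialE hS hl hls; rewrite size_rcons size_L L_S => /rcons_inj [].
by case: (l n).
Qed.

Lemma rspecial_lxL k : rightSpecial u (L l k) -> rightSpecial u (l k :: L l k).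
Proof.
move=> h; have h1 := lang_wext hS hl h.
have h2 : lang u (rcons (l k :: L l k) (l k)) by rewrite rcons_cons -L_S; exact: lang_xL.
by move: h1 h2; rewrite /wext; case: (l k) => ha hb; split.
Qed.

Lemma rspecial_significantE t : rightSpecial u t /\ significant u t <->
  exists k, rightSpecial u (L l k) /\ t = l k :: L l k.
Proof.
split; last first.
  case=> k [hk ->]; split; first exact: rspecial_lxL.
  by case: k hk => [|k] hk; [exact: significant1 | exact: significant_xL].
case=> hr /(significantE hS hl) [hlt [h1|[x [n [hn et]]]]].
  have h0 : rightSpecial u (L l 0) by exact: rspecial_L0.
  exists 0; split => //.
  by apply: (rspecial_uniq hS hr (rspecial_lxL h0)); rewrite h1.
subst t; have hn' : rightSpecial u (L l n).
  by case: hr; rewrite !rcons_cons => /lang_cons h0 /lang_cons h1.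
exists n; split => //; congr (_ :: _).
by apply: (lext_wext_uniq (b := l n)) (lang_wext hS hl hn'); case: hr; case: (l n).
Qed.

Lemma significant_suffix_wext n t : rightSpecial u (L l n) -> suffix t (wext l n) ->
  significant u t -> 1 < size t ->
  exists k, [/\ k < n, rightSpecial u (L l k), l k = ~~ l n & size t = k.+2].
Proof.
move=> hn /suffixP [s e] /(significantE hS hl) [_ [h1|[x [K [hK et]]]]] hsz.
  by rewrite h1 in hsz.
subst t; case: K hK e hsz => [//|K] _ e _.
move: e; rewrite L_S -rcons_cons -rcons_cat /wext => /rcons_inj [e1 e2].
have hsz : size (l n :: L l n) = size (s ++ x :: L l K) by rewrite e1.
rewrite /= size_cat /= !size_L in hsz.
case: (ltnP K n) => hKn; last by move: e2; rewrite (_ : K = n); [case: (l n) | lia].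
exists K; split => //; last by rewrite size_rcons /= size_L.
have := rspecial_drop (size s) hS hn.
have -> // : drop (size s) (L l n) = L l K.
by have := congr1 (drop (size s).+1) e1; rewrite /= -cat_rcons drop_cat size_rcons ltnn subnn drop0.
Qed.

Lemma drop_lxL n j : rightSpecial u (L l n) -> rightSpecial u (L l j) -> j <= n ->
  drop (n - j) (l n :: L l n) = l j :: L l j.
Proof.
move=> hn hj hjn; apply: (rspecial_uniq hS); [exact/rspecial_drop/rspecial_lxL | exact: rspecial_lxL |].
by rewrite size_drop /= !size_L; lia.
Qed.

Lemma IsSig_wext_lxL n j : rightSpecial u (L l n) -> j < n -> rightSpecial u (L l j) ->
  l j = ~~ l n -> (forall k, j < k -> k < n -> rightSpecial u (L l k) -> l k = l n) ->
  IsSig u (wext l n) (l j :: L l j.+1).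
Proof.
move=> hn hjn hj elj hmax.
have hsuf : wext l n = take (n - j) (l n :: L l n) ++ (l j :: L l j.+1).
  rewrite L_S -rcons_cons -(drop_lxL hn hj (ltnW hjn)) elj /wext -rcons_cat.
  by rewrite cat_take_drop.
split.
- by apply/suffixP; exists (take (n - j) (l n :: L l n)).
- exact: significant_xL.
move=> t ht hsig; case: (leqP (size t) 1) => hs; first by rewrite size_xL; lia.
have [k [hk1 hk2 hk3 hk4]] := significant_suffix_wext hn ht hsig hs.
rewrite hk4 size_xL ltnS; case: (leqP k j) => // hkj.
by have := hmax k hkj hk1 hk2; rewrite hk3; case: (l n).
Qed.

Lemma IsSig_wext_flip n : rightSpecial u (L l n) ->
  (forall k, k < n -> rightSpecial u (L l k) -> l k = l n) -> IsSig u (wext l n) [:: ~~ l n].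
Proof.
move=> hn hmax; split.
- by apply/suffixP; exists (l n :: L l n); rewrite /wext cats1.
- exact: significant1.
move=> t ht hsig; case: (leqP (size t) 1) => hs //.
have [k [hk1 hk2 hk3 hk4]] := significant_suffix_wext hn ht hsig hs.
by have := hmax k hk1 hk2; rewrite hk3; case: (l n).
Qed.

Lemma last_flip_rspecial n : rightSpecial u (L l n) ->
  (exists j, [/\ j < n, rightSpecial u (L l j), l j = ~~ l n
               & forall k, j < k -> k < n -> rightSpecial u (L l k) -> l k = l n]) \/
  (forall k, k < n -> rightSpecial u (L l k) -> l k = l n).
Proof.
move=> hn; case: (boolP [exists j : 'I_n, rspecialb u (L l j) && (l j != l n)]) => hex.
  have ex : exists j, [&& j < n, rspecialb u (L l j) & l j != l n].
    by case/existsP: hex => j /andP[h1 h2]; exists j; rewrite ltn_ord h1 h2.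
  have ub j : [&& j < n, rspecialb u (L l j) & l j != l n] -> j <= n by case/andP => /ltnW.
  case: (ex_maxnP ex ub) => j /and3P[h1 /rspecialP h2 h3] hmax; left; exists j.
  split => //; first by case: (l j) h3; case: (l n).
  move=> k hk1 hk2 hk3; apply/eqP; apply: contraTT hk1 => hne; rewrite -leqNgt.
  by apply: hmax; rewrite hk2 hne andbT; exact/rspecialP.
right=> k hk1 hk2; apply/eqP; apply: contraNT hex => hne; apply/existsP.
by exists (Ordinal hk1); rewrite /= hne andbT; exact/rspecialP.
Qed.

Lemma IsSig_wext_same_letter m n : rightSpecial u (L l m) -> rightSpecial u (L l n) ->
  m < n -> (forall k, m < k -> k < n -> ~ rightSpecial u (L l k)) -> l m = l n ->
  forall b, IsSig u (wext l n) b <-> IsSig u (wext l m) b.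
Proof.
move=> hm hn hmn hgap e.
suff [b0 h0m h0n] : exists2 b0, IsSig u (wext l m) b0 & IsSig u (wext l n) b0.
  by move=> b; split => h; [rewrite -(IsSig_uniq h0n h) | rewrite -(IsSig_uniq h0m h)].
have below k : k < n -> rightSpecial u (L l k) -> l k = l n \/ k < m.
  move=> hk hrk; case: (ltngtP k m) => [|hkm|->]; [by right | | by left].
  by case: (hgap k).
case: (last_flip_rspecial hm) => [[j [hjm hj elj hmax]]|hall].
  exists (l j :: L l j.+1); first exact: IsSig_wext_lxL.
  apply: IsSig_wext_lxL => //; [lia | by rewrite -e |].
  move=> k hk1 hk2 hk3; case: (below k hk2 hk3) => // hkm.
  by rewrite -e; exact: hmax.
exists [:: ~~ l m]; first exact: IsSig_wext_flip.
rewrite e; apply: IsSig_wext_flip => // k hk1 hk2; case: (below k hk1 hk2) => // hkm.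
by rewrite -e; exact: hall.
Qed.

End HBDiagram.

(* Item (1) of the theorem is the arrow [l 0] -> [~~ l 0] together with the case n = 0
   of item (2). *)
Lemma HBlistedE u l a b : HBlisted u l a b <->
  [\/ a = [:: l 0] /\ b = [:: ~~ l 0],
      exists x n, a = x :: L l n /\ b = x :: L l n.+1
    | exists x w n m, [/\ m < n, consecRS u (w :: L l m) (x :: L l n), a = x :: L l n
        & (x != w /\ b = w :: L l m.+1) \/ (x = w /\ IsSig u (rcons (w :: L l m) (~~ l m)) b)]].
Proof.
have L1 x : x :: L l 1 = [:: x; l 0] by [].
split.
  case=> [[e0 [[-> ->]|[-> ->]|[-> ->]]]|[[e0 [[-> ->]|[-> ->]|[-> ->]]]|[[x [n [_ [-> ->]]]]|h3]]];
    try by [constructor 1; rewrite e0 | constructor 2; exists false, 0; rewrite L1 e0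
           | constructor 2; exists true, 0; rewrite L1 e0 | constructor 2; exists x, n].
  by constructor 3.
case=> [[-> ->]|[x [[|n] [-> ->]]]|h3]; last (by do 3 right); last (by right; right; left; exists x, n.+1).
  by case e0 : (l 0); [right; left | left]; split => //; constructor 1.
by rewrite L1; case e0 : (l 0); case: x; [right; left | right; left | left | left];
  split => //; by [constructor 2 | constructor 3].
Qed.

Section Arrows.
Variable u : nat -> bool.
Hypothesis hS : Sturmian u.
Variable l : nat -> bool.
Hypothesis hl : forall n, leftSpecial u (L l n).

Lemma significant_cases v : significant u v <->
  [\/ v = [:: false], v = [:: true] | exists x n, 1 <= n /\ v = x :: L l n].
Proof.
split.
  case/(significantE hS hl) => hv [h1|h2]; last by constructor 3.
  by case: v hv h1 => [//|[] [|//]] _ _; [constructor 2 | constructor 1].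
case=> [->|->|[x [n [hn ->]]]]; [exact: significant1 | exact: significant1 | exact: significant_xL].
Qed.

Lemma significant_xL_any x n : significant u (x :: L l n).
Proof. by case: n => [|n]; [exact: significant1 | exact: significant_xL]. Qed.

Lemma HBarrow_lext x n : HBarrow u (x :: L l n) (x :: L l n.+1).
Proof.
split; first exact: significant_xL_any.
exists (l n); rewrite rcons_cons -L_S; split; first exact: lang_xL.
exact/IsSig_refl/significant_xL.
Qed.

Lemma consecRSE w x m n : consecRS u (w :: L l m) (x :: L l n) <->
  [/\ (w, x) = (l m, l n), rightSpecial u (L l m), rightSpecial u (L l n), m < n
    & forall k, m < k -> k < n -> ~ rightSpecial u (L l k)].
Proof.
have hsig t := rspecial_significantE hS hl t.
split=> [[/hsig [k1 [hk1 [-> e1]]] /hsig [k2 [hk2 [-> e2]]] hsz hgap]|].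
  have ek k k' : L l k = L l k' -> k = k' by move/(congr1 size); rewrite !size_L.
  move: (ek _ _ e1) (ek _ _ e2) hk1 hk2 hsz => <- <- hk1 hk2 hsz.
  split => //; first by rewrite !size_xL in hsz.
  move=> k hk3 hk4 hk; have [hr hs] := (hsig (l k :: L l k)).2 (ex_intro _ k (conj hk erefl)).
  by apply: (hgap _ hr hs); rewrite !size_xL.
case=> -[-> ->] hm hn hmn hgap; split; [by apply/hsig; exists m | by apply/hsig; exists n | by rewrite !size_xL |].
move=> v hr hs [h1 h2]; have [k [hk ev]] := (hsig v).1 (conj hr hs).
by subst v; rewrite !size_xL in h1 h2; apply: (hgap k).
Qed.

Lemma HBarrow_rspecial x w n m b : m < n -> consecRS u (w :: L l m) (x :: L l n) ->
  (x != w /\ b = w :: L l m.+1) \/ (x = w /\ IsSig u (rcons (w :: L l m) (~~ l m)) b) ->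
  HBarrow u (x :: L l n) b.
Proof.
move=> _ /consecRSE [[-> ->] hm hn hmn hgap] hb.
split; first exact: significant_xL_any.
exists (~~ l n); split; first exact: (lang_wext hS hl hn).
case: hb => [[hne ->]|[he hs]].
  apply: IsSig_wext_lxL => //; first by case: (l m) hne; case: (l n).
  by move=> k hk1 hk2 hk3; case: (hgap k).
by apply/(IsSig_wext_same_letter hS hl hm hn hmn hgap (esym he)).
Qed.

Lemma HBarrow_flip0 : HBarrow u [:: l 0] [:: ~~ l 0].
Proof.
have h0 : rightSpecial u (L l 0) by exact: rspecial_L0.
split; first exact: significant1.
exists (~~ l 0); split; first exact: (lang_wext hS hl h0).
by apply: (IsSig_wext_flip hS hl h0) => k.
Qed.

Lemma HBlisted_of_arrow a b : HBarrow u a b -> HBlisted u l a b.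
Proof.
move=> [hsa [c [hlc hsig]]]; apply/HBlistedE.
have [x [n ea]] : exists x n, a = x :: L l n.
  by case/significant_cases: hsa => [->|->|[x [n [_ ->]]]]; [exists false, 0 | exists true, 0 | exists x, n].
subst a; case: (eqVneq c (l n)) => [ec|hc].
  constructor 2; exists x, n; split => //; apply: (IsSig_uniq hsig).
  by rewrite ec rcons_cons -L_S; apply/IsSig_refl/significant_xL_any.
have {hc} ec : c = ~~ l n by case: c hc {hlc hsig}; case: (l n).
subst c; have hn : rightSpecial u (L l n).
  by move: (lang_cons hlc) (lang_L hl n.+1); rewrite L_S; case: (l n).
have ex : x = l n := lext_wext_uniq hS hl hlc (lang_wext hS hl hn).
subst x; case: n hn hlc hsig hsa => [|n] hn _ hsig _.
  by constructor 1; split => //; apply: (IsSig_uniq hsig); apply: (IsSig_wext_flip hS hl hn).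
have [m [hmn hm hgap]] := prev_rspecial hS l (ltn0Sn n).
constructor 3; exists (l n.+1), (l m), n.+1, m; split => //; first exact/consecRSE.
case: (eqVneq (l n.+1) (l m)) => he; [right | left]; split => //.
  exact/(IsSig_wext_same_letter hS hl hm hn hmn hgap (esym he)).
apply: (IsSig_uniq hsig); apply: (IsSig_wext_lxL hS hl hn hmn hm); first by case: (l m) he; case: (l n.+1).
by move=> k hk1 hk2 hk3; case: (hgap k).
Qed.

Lemma HBarrow_of_listed a b : HBlisted u l a b -> HBarrow u a b.
Proof.
case/HBlistedE => [[-> ->]|[x [n [-> ->]]]|[x [w [n [m [hmn hc -> hb]]]]]].
- exact: HBarrow_flip0.
- exact: HBarrow_lext.
- exact: HBarrow_rspecial hmn hc hb.
Qed.

End Arrows.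

Theorem theorem4p13 (u l : nat -> bool) :
  Sturmian u ->
  (forall n, leftSpecial u (L l n)) ->
  (forall v, significant u v <->
     [\/ v = [:: false], v = [:: true]
       | exists (x : bool) (n : nat), 1 <= n /\ v = x :: L l n]) /\
  (forall a b, HBarrow u a b <-> HBlisted u l a b).
Proof.
move=> hS hl; split=> [v|a b]; first exact: significant_cases.
by split; [exact: HBlisted_of_arrow | exact: HBarrow_of_listed].
Qed.
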